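(* Let $k\ge 2$ be an integer. For any $\epsilon\in(0,1)$, let $N$ be the integer part of $1/\epsilon$. Then $\widetilde{Z}_k(N+1)\le Z_k(\epsilon)\le \widetilde{Z}_k(N)$.
   Context: $\mu_{k+1}(q)$ denotes the indicator function of the $(k+1)$-free positive integers (not divisible by $p^{k+1}$ for any prime $p$); $p$ always denotes a prime. For $\epsilon\in(0,1)$, \[ Z_k(\epsilon)=\sum_{q\ge 1/\epsilon}\mu_{k+1}(q)\sum_{\substack{1\le m\le q\epsilon\\ \gcd(m,q)=1}}\ \prod_{p\mid q}\frac{1}{(p^k-1)^2} \] (this is the normalized diffraction intensity $\nu_k((0,\epsilon])/\nu_k(\{0\})$ of the $k$-free integers). For $N\in\mathbb{N}$, \[ \widetilde{Z}_k(N):=\sum_{q\in\mathbb{N}}\mu_{k+1}(q)\Bigl(\prod_{p\mid q}\frac{1}{(p^k-1)^2}\Bigr)\#\{m\in\mathbb{N}\cap[1,q/N]:\gcd(m,q)=1\}. \] *)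

From mathcomp Require Import all_boot all_order all_algebra.
From mathcomp Require Import reals ereal sequences.
Set Implicit Arguments. Unset Strict Implicit. Unset Printing Implicit Defensive.
Import Order.TTheory GRing.Theory Num.Theory.
Local Open Scope ring_scope.

Definition jfree (j q : nat) : bool :=
  (0 < q)%N && all (fun p => ~~ (p ^ j %| q)%N) (primes q).

Definition wprod {R : realType} (k q : nat) : R :=
  \prod_(p <- primes q) (((p ^ k)%:R - 1) ^+ 2)^-1.

(* #{ m in N : 1 <= m <= q*eps, gcd(m,q) = 1 }  (note: such m are <= q when eps < 1) *)
Definition cnt_eps {R : realType} (eps : R) (q : nat) : nat :=
  \sum_(1 <= m < q.+1 | coprime m q && (m%:R <= q%:R * eps)) 1.

(* #{ m in N cap [1, q/N] : gcd(m,q) = 1 }  (m <= q/N <= q for N >= 1) *)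
Definition cnt_N {R : realType} (N q : nat) : nat :=
  \sum_(1 <= m < q.+1 | coprime m q && ((m%:R : R) <= q%:R / N%:R)) 1.

Definition Zk {R : realType} (k : nat) (eps : R) : \bar R :=
  (\sum_(0 <= q <oo)
     (if jfree k.+1 q && (eps^-1 <= q%:R)
      then (cnt_eps eps q)%:R * wprod k q else 0)%:E)%E.

Definition Ztk {R : realType} (k N : nat) : \bar R :=
  (\sum_(0 <= q <oo)
     (if jfree k.+1 q then (cnt_N (R:=R) N q)%:R * wprod k q else 0)%:E)%E.

From mathcomp Require Import all_boot all_order all_algebra.
From mathcomp Require Import reals ereal sequences.
Import Order.TTheory GRing.Theory Num.Theory.
Local Open Scope ring_scope.

(* Since [q/N] is [q * N^-1], both counting functions are [cnt_eps] at
   different thresholds, and counting is monotone in the threshold.  For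
   [1/eps <= q] the series terms are therefore compared through
   [1/(N+1) < eps <= 1/N]; for [q < 1/eps < N+1] the interval [[1, q/(N+1)]]
   contains no integer, so the term of [Ztk (N+1)] dropped by [Zk] vanishes. *)

Section Counting.
Variable R : realType.

Lemma wprod_ge0 (k q : nat) : 0 <= wprod (R:=R) k q.
Proof. by apply: prodr_ge0 => p _; rewrite invr_ge0 sqr_ge0. Qed.

Lemma natr_wprod_ge0 (n k q : nat) : 0 <= n%:R * wprod (R:=R) k q.
Proof. by rewrite mulr_ge0 ?wprod_ge0. Qed.

Lemma cnt_NE (N q : nat) : cnt_N (R:=R) N q = cnt_eps (N%:R^-1 : R) q.
Proof. by []. Qed.

Lemma le_cnt_eps (a b : R) (q : nat) :
  a <= b -> (cnt_eps a q <= cnt_eps b q)%N.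
Proof.
move=> le_ab; rewrite /cnt_eps [X in (X <= _)%N]big_mkcond.
rewrite [X in (_ <= X)%N]big_mkcond; apply: leq_sum => m _.
case: (coprime m q) => //=; case: ifP => // le_ma.
by rewrite (le_trans le_ma) ?ler_wpM2l.
Qed.

Lemma cnt_eps_eq0 (a : R) (q : nat) : q%:R * a < 1 -> cnt_eps a q = 0%N.
Proof.
move=> qa_lt1; rewrite /cnt_eps big_nat_cond big_pred0 // => m.
apply/negP => /andP[/andP[m_gt0 _] /andP[_ le_ma]].
by move: (le_lt_trans le_ma qa_lt1); rewrite ltNge ler1n m_gt0.
Qed.

Lemma cnt_N_eq0 (N q : nat) : (q < N)%N -> cnt_N (R:=R) N q = 0%N.
Proof.
move=> lt_qN; have N_gt0 : (0 < N)%N := leq_ltn_trans (leq0n q) lt_qN.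
by rewrite cnt_NE cnt_eps_eq0 // ltr_pdivrMr ?mul1r ?ltr_nat ?ltr0n.
Qed.

End Counting.

Theorem lemma2p1 (R : realType) (k : nat) (eps : R) (N : nat) :
  (2 <= k)%N -> 0 < eps < 1 ->
  N%:R <= eps^-1 < N.+1%:R ->
  (Ztk (R:=R) k N.+1 <= Zk k eps /\ Zk k eps <= Ztk (R:=R) k N)%E.
Proof.
(* [2 <= k] only makes the series finite; termwise comparison of
   nonnegative extended-real series does not need it. *)
move=> _ /andP[eps_gt0 eps_lt1] /andP[le_N_inv lt_inv_N1].
have N_gt0 : (0 < N)%N.
  rewrite lt0n; apply: contraTneq lt_inv_N1 => ->.
  by rewrite -leNgt ltW // invf_gt1.
have le_eps_N : eps <= N%:R^-1.
  by rewrite -[eps]invrK lef_pV2 ?posrE ?invr_gt0 ?ltr0n.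
have lt_N1_eps : N.+1%:R^-1 < eps.
  by rewrite -[eps]invrK ltf_pV2 ?posrE ?invr_gt0 ?ltr0n.
rewrite /Ztk /Zk; split; (apply: lee_nneseries => [q _ _|q _];
  first by case: ifP; rewrite lee_fin ?natr_wprod_ge0).
- case: ifP => // jfree_q /=; rewrite lee_fin.
  have [_ | lt_q_inv] := leP eps^-1 q%:R.
    by rewrite ler_wpM2r ?wprod_ge0 // ler_nat cnt_NE le_cnt_eps ?ltW.
  have lt_qN1 : (q < N.+1)%N by rewrite -(ltr_nat R) (lt_trans lt_q_inv).
  by rewrite cnt_N_eq0 // mul0r.
- case: ifP => [/andP[-> _] | _]; last by case: ifP; rewrite lee_fin ?natr_wprod_ge0.
  by rewrite lee_fin ler_wpM2r ?wprod_ge0 // ler_nat cnt_NE le_cnt_eps.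
Qed.
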